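(* Let $S$ be a polynomial ring over a field $k$, let $x$ be a variable of $S$, and let $R = S/(x)$, identified with the polynomial ring in the remaining variables. Let $I$ be a squarefree monomial ideal in $S$ and let $xF_1, \ldots, xF_n$ be the minimal monomial generators of $I$ divisible by $x$. Let $H = (I:x)/I$, regarded as an $R$-module, with generators the images of $F_1,\dots,F_n$. Let $N$ be the block diagonal matrix whose $i$-th block is the row matrix consisting of the minimal monomial generators of $I:F_i$ (over $R$), and let $P$ be the matrix whose columns are the minimal syzygies of the ideal $(F_1,\ldots,F_n)$ of $R$. Then the block matrix $M = (N \mid P)$ is a presentation matrix for $H$ (with respect to the surjection $R^n \to H$ sending the $i$-th basis vector to the class of $F_i$).
   Context: A presentation matrix for an $R$-module $H$ with respect to a surjection $R^n \to H$ is a matrix whose columns generate the kernel of that surjection. *)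

From HB Require Import structures.
From mathcomp Require Import all_boot all_order all_algebra.
From mathcomp Require Import mpoly.
Set Implicit Arguments. Unset Strict Implicit. Unset Printing Implicit Defensive.
Import GRing.Theory.
Local Open Scope ring_scope.

Section Defs.
Variables (k : fieldType) (m : nat).
Local Notation S := {mpoly k[m]}.

Definition in_ideal (G : seq S) (f : S) : Prop :=
  exists c : 'I_(size G) -> S, f = \sum_(i < size G) c i * G`_i.

Definition mon_ideal (gens : seq 'X_{1..m}) : S -> Prop :=
  in_ideal [seq ('X_[u] : S) | u <- gens].

Definition squarefree_mon (u : 'X_{1..m}) : Prop := forall i, (u i <= 1)%N.

Definition squarefree_gens (gens : seq 'X_{1..m}) : Prop :=
  forall u, u \in gens -> squarefree_mon u.

(* f lies in R = k[X_j : j <> x], i.e. no monomial of f involves the variable x. *)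
Definition in_R (x : 'I_m) (f : S) : Prop :=
  forall u, u \in msupp f -> u x = 0%N.

Definition colon (J : S -> Prop) (g : S) : S -> Prop := fun f => J (f * g).

(* Image in R = S/(x) (identified with k[X_j : j <> x]) of an ideal J of S:
   the elements of R congruent mod (x) to an element of J. *)
Definition image_mod_x (x : 'I_m) (J : S -> Prop) : S -> Prop :=
  fun f => in_R x f /\ exists g h : S, J g /\ f = g + h * 'X_x.

Definition min_mon_gen (J : S -> Prop) (u : 'X_{1..m}) : Prop :=
  J 'X_[u] /\ forall v : 'X_{1..m}, lem v u -> J 'X_[v] -> v = u.

Definition R_colspan (x : 'I_m) (n c : nat) (M : 'M[S]_(n, c)) (v : 'cV[S]_n) : Prop :=
  exists w : 'cV[S]_c, (forall j, in_R x (w j 0)) /\ v = M *m w.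

(* M (entries in R) is a presentation matrix of H = (I:x)/I with respect to the
   surjection R^n -> H, e_i |-> class of F_i: its columns generate (over R) the
   kernel of that map, i.e. the set of v in R^n with sum_i v_i F_i in I. *)
Definition presentation_matrix (x : 'I_m) (I : S -> Prop) (n c : nat)
    (F : 'I_n -> 'X_{1..m}) (M : 'M[S]_(n, c)) : Prop :=
  (forall i j, in_R x (M i j)) /\
  forall v : 'cV[S]_n, (forall i, in_R x (v i 0)) ->
    (I (\sum_i v i 0 * 'X_[F i]) <-> R_colspan x M v).

End Defs.

(* Since I is
   a monomial ideal, split each v_i into the terms c X^b with X^b F_i in I and
   the remaining ones.  For a term of the first kind, X^b lies in the image of
   I : F_i modulo x, so it is a multiple of one of its minimal generators, and
   the term is an R-multiple of a column of N.  The remaining terms produce no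
   monomial of I; their image, being in I, is therefore 0, i.e. they form a
   syzygy of (F_1, ..., F_n), which is an R-combination of the columns of P.
   Conversely the columns of N map into I because x F_i is in I, and those of
   P map to 0. *)
From HB Require Import structures.
From mathcomp Require Import all_boot all_order all_algebra.
From mathcomp Require Import mpoly.
From Stdlib Require Import Classical.
Import GRing.Theory.
Local Open Scope ring_scope.

Set Implicit Arguments.
Unset Strict Implicit.

Section MonomialIdeals.
Variables (k : fieldType) (m : nat).
Local Notation S := {mpoly k[m]}.

Section InR.
Variable x : 'I_m.

Lemma in_R0 : in_R x (0 : S).
Proof. by move=> u; rewrite msupp0. Qed.

Lemma in_RD (f g : S) : in_R x f -> in_R x g -> in_R x (f + g).
Proof. by move=> hf hg u /msuppD_le; rewrite mem_cat => /orP[/hf|/hg]. Qed.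

Lemma in_RM (f g : S) : in_R x f -> in_R x g -> in_R x (f * g).
Proof.
move=> hf hg u /msuppM_le /allpairsP [[u1 u2]] /= [h1 h2 ->].
by rewrite mnmDE (hf _ h1) (hg _ h2).
Qed.

Lemma in_RZ c (f : S) : in_R x f -> in_R x (c *: f).
Proof. by move=> hf u /msuppZ_le; apply: hf. Qed.

Lemma in_RX (b : 'X_{1..m}) : b x = 0%N -> in_R x ('X_[b] : S).
Proof. by move=> hb u; rewrite msuppX mem_seq1 => /eqP ->. Qed.

Lemma in_R1 : in_R x (1 : S).
Proof. by rewrite -mpolyX0; apply: in_RX; rewrite mnm0E. Qed.

Lemma in_RC c : in_R x (c%:MP : S).
Proof. by rewrite -[c%:MP]mulr1 mul_mpolyC; apply/in_RZ/in_R1. Qed.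

Lemma in_R_sum (I : Type) (r : seq I) (P : pred I) (E : I -> S) :
  (forall i, P i -> in_R x (E i)) -> in_R x (\sum_(i <- r | P i) E i).
Proof. by apply: (big_ind (in_R x)); [apply: in_R0 | apply: in_RD]. Qed.

End InR.

Section Ideal.
Variable G : seq S.
Local Notation I := (in_ideal G).

Lemma in_ideal0 : I 0.
Proof. by exists (fun _ => 0); rewrite big1 // => i _; rewrite mul0r. Qed.

Lemma in_idealD f g : I f -> I g -> I (f + g).
Proof.
move=> [c ->] [d ->]; exists (fun i => c i + d i).
by rewrite -big_split; apply: eq_bigr => i _; rewrite mulrDl.
Qed.

Lemma in_idealMl r f : I f -> I (r * f).
Proof.
move=> [c ->]; exists (fun i => r * c i).
by rewrite mulr_sumr; apply: eq_bigr => i _; rewrite mulrA.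
Qed.

Lemma in_idealN f : I f -> I (- f).
Proof. by move=> h; rewrite -mulN1r; apply: in_idealMl. Qed.

Lemma in_ideal_sum (J : Type) (r : seq J) (P : pred J) (E : J -> S) :
  (forall i, P i -> I (E i)) -> I (\sum_(i <- r | P i) E i).
Proof. by apply: (big_ind I); [apply: in_ideal0 | apply: in_idealD]. Qed.

Lemma in_ideal_nth (i : 'I_(size G)) : I G`_i.
Proof.
exists (fun j => (j == i)%:R); rewrite (bigD1 i) //= eqxx mul1r big1 ?addr0 //.
by move=> j /negbTE ->; rewrite mul0r.
Qed.

Lemma colon_image_mod_x x h f :
  I ('X_x * h) -> image_mod_x x (colon I h) f -> I (f * h).
Proof.
move=> xhI [_ [g [c [ghI ->]]]].
by rewrite mulrDl -mulrA; apply: in_idealD => //; apply: in_idealMl.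
Qed.

End Ideal.

Definition divisible_by_gens (gens : seq 'X_{1..m}) : pred 'X_{1..m} :=
  fun g => has (fun u => (u <= g)%MM) gens.

Section MonIdeal.
Variable gens : seq 'X_{1..m}.
Local Notation I := (@mon_ideal k m gens).

Lemma mon_ideal_gen u : u \in gens -> I 'X_[u].
Proof.
move=> u_gens; have lt_u : (index u gens < size [seq 'X_[v] : S | v <- gens])%N.
  by rewrite size_map index_mem.
have := in_ideal_nth (Ordinal lt_u).
by rewrite /= (nth_map 0%MM) ?nth_index // -(size_map (fun v => 'X_[v] : S)).
Qed.

Lemma mon_idealP (f : S) :
  I f <-> forall g, g \in msupp f -> divisible_by_gens gens g.
Proof.
split.
  case=> c -> g /msupp_sum_le /flattenP [s /mapP [i _ ->]].
  have lt_i : (i < size gens)%N by rewrite -(size_map (fun v => 'X_[v] : S)).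
  rewrite (nth_map 0%MM) // (perm_mem (msuppMX _ _)) => /mapP [b _ ->].
  by apply/hasP; exists (nth 0%MM gens i); [apply: mem_nth | apply: lem_addr].
move=> fdiv; rewrite (mpolyE f) big_seq.
apply: in_ideal_sum => b /fdiv /hasP [u u_gens le_ub].
rewrite -mul_mpolyC -(submK le_ub) mpolyXD mulrA.
by apply/in_idealMl/mon_ideal_gen.
Qed.

Lemma mon_idealX g : divisible_by_gens gens g -> I 'X_[g].
Proof.
by move=> g_div; apply/mon_idealP => b; rewrite msuppX mem_seq1 => /eqP ->.
Qed.

End MonIdeal.

Lemma min_mon_gen_exists (J : S -> Prop) b :
  J 'X_[b] -> exists2 u, (u <= b)%MM & min_mon_gen J u.
Proof.
elim/(@ltmwf m): b => b IH Jb.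
have [[v [le_vb Jv ne_vb]] | no_smaller] :=
  classic (exists v, [/\ (v <= b)%MM, J 'X_[v] & v <> b]).
  have lt_vb : (v < b)%O.
    by rewrite Order.POrderTheory.lt_neqAle lem_leo // andbT; apply/eqP.
  have [u le_uv min_u] := IH v lt_vb Jv.
  by exists u => //; apply: lepm_trans le_vb.
exists b; first exact: lepm_refl.
by split=> // v le_vb Jv; apply: NNPP => ne_vb; apply: no_smaller; exists v.
Qed.

Definition mon_part (P : pred 'X_{1..m}) (f : S) : S :=
  \sum_(b <- msupp f | P b) f@_b *: 'X_[b].

Lemma msupp_mon_part P f b :
  b \in msupp (mon_part P f) -> (b \in msupp f) && P b.
Proof.
move/msupp_sum_le/flattenP => [s /mapP [b' b'_f ->]] /msuppZ_le.
by rewrite msuppX mem_seq1 => /eqP ->; rewrite andbC -mem_filter.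
Qed.

Lemma mon_partE P f : mon_part P f + mon_part (predC P) f = f.
Proof. by rewrite [RHS]mpolyE (bigID P). Qed.

Lemma in_R_mon_part x P f : in_R x f -> in_R x (mon_part P f).
Proof. by move=> fR b /msupp_mon_part /andP [/fR]. Qed.

Section ColumnSpan.
Variables (x : 'I_m) (n c : nat) (M : 'M[S]_(n, c)).
Local Notation span := (R_colspan x M).

Lemma R_colspan0 : span 0.
Proof.
by exists 0; rewrite mulmx0; split=> // j; rewrite mxE; apply: in_R0.
Qed.

Lemma R_colspanD v1 v2 : span v1 -> span v2 -> span (v1 + v2).
Proof.
move=> [w1 [h1 ->]] [w2 [h2 ->]]; exists (w1 + w2); rewrite mulmxDr.
by split=> // j; rewrite mxE; apply: in_RD.
Qed.

Lemma R_colspanZ r v : in_R x r -> span v -> span (r *: v).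
Proof.
move=> rR [w [wR ->]]; exists (r *: w); rewrite scalemxAr.
by split=> // j; rewrite mxE; apply: in_RM.
Qed.

Lemma R_colspan_sum (J : Type) (s : seq J) (P : pred J) (E : J -> 'cV[S]_n) :
  (forall i, P i -> span (E i)) -> span (\sum_(i <- s | P i) E i).
Proof. by apply: (big_ind span); [apply: R_colspan0 | apply: R_colspanD]. Qed.

Lemma R_colspan_col j : span (col j M).
Proof.
exists (delta_mx j 0); rewrite colE; split=> // i; rewrite mxE.
by case: eqP => _; [apply: in_R1 | apply: in_R0].
Qed.

Lemma R_colspan_row_mxl c' (M' : 'M[S]_(n, c')) v :
  span v -> R_colspan x (row_mx M M') v.
Proof.
move=> [w [wR ->]]; exists (col_mx w 0); rewrite mul_row_col mulmx0 addr0.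
split=> // j; rewrite -(splitK j); case: (split j) => j' /=.
  by rewrite col_mxEu.
by rewrite col_mxEd mxE; apply: in_R0.
Qed.

Lemma R_colspan_row_mxr c' (M' : 'M[S]_(n, c')) v :
  span v -> R_colspan x (row_mx M' M) v.
Proof.
move=> [w [wR ->]]; exists (col_mx 0 w); rewrite mul_row_col mulmx0 add0r.
split=> // j; rewrite -(splitK j); case: (split j) => j' /=.
  by rewrite col_mxEu mxE; apply: in_R0.
by rewrite col_mxEd.
Qed.

End ColumnSpan.

Section Combination.
Variables (n : nat) (F : 'I_n -> 'X_{1..m}).

Definition mon_comb (v : 'cV[S]_n) : S := \sum_i v i 0 * 'X_[F i].

Lemma mon_combD u v : mon_comb (u + v) = mon_comb u + mon_comb v.
Proof. by rewrite -big_split; apply: eq_bigr => i _; rewrite mxE mulrDl. Qed.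

Lemma mon_comb_mulmx c (M : 'M[S]_(n, c)) w :
  mon_comb (M *m w) = \sum_j w j 0 * mon_comb (col j M).
Proof.
rewrite /mon_comb; under eq_bigr => i _ do rewrite mxE big_distrl.
rewrite exchange_big; apply: eq_bigr => j _; rewrite mulr_sumr.
by apply: eq_bigr => i _; rewrite mxE mulrA [w j 0 * _]mulrC.
Qed.

Lemma mon_comb_delta f i : mon_comb (f *: delta_mx i 0) = f * 'X_[F i].
Proof.
rewrite /mon_comb (bigD1 i) //= big1 ?addr0 => [|i' ne_i'i].
  by rewrite !mxE !eqxx mulr1.
by rewrite !mxE (negbTE ne_i'i) mulr0 mul0r.
Qed.

Lemma mon_comb_in_ideal G x c (M : 'M[S]_(n, c)) v :
  (forall j, in_ideal G (mon_comb (col j M))) ->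
  R_colspan x M v -> in_ideal G (mon_comb v).
Proof.
move=> colI [w [_ ->]]; rewrite mon_comb_mulmx.
by apply: in_ideal_sum => j _; apply: in_idealMl.
Qed.

Lemma msupp_mon_comb_part (Q : 'I_n -> pred 'X_{1..m}) (D : pred 'X_{1..m})
    (v : 'cV[S]_n) :
  (forall i b, Q i b -> D (b + F i)%MM) ->
  forall g, g \in msupp (mon_comb (\col_i mon_part (Q i) (v i 0))) -> D g.
Proof.
move=> QD g /msupp_sum_le /flattenP [s /mapP [i _ ->]].
rewrite mxE (perm_mem (msuppMX _ _)).
move=> /mapP [b /msupp_mon_part /andP [_ Qb] ->].
by rewrite addmC; apply: QD.
Qed.

End Combination.

Definition colon_monomials (gens : seq 'X_{1..m}) (u : 'X_{1..m}) :
    pred 'X_{1..m} :=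
  fun b => divisible_by_gens gens (b + u)%MM.

Section Splitting.
Variables (gens : seq 'X_{1..m}) (n : nat) (F : 'I_n -> 'X_{1..m}).
Local Notation I := (@mon_ideal k m gens).

Definition colon_part (v : 'cV[S]_n) : 'cV[S]_n :=
  \col_i mon_part (colon_monomials gens (F i)) (v i 0).

Definition noncolon_part (v : 'cV[S]_n) : 'cV[S]_n :=
  \col_i mon_part (predC (colon_monomials gens (F i))) (v i 0).

Lemma colon_noncolon_partE v : colon_part v + noncolon_part v = v.
Proof. by apply/matrixP => i j; rewrite (ord1 j) !mxE mon_partE. Qed.

Lemma in_R_noncolon_part (x : 'I_m) (v : 'cV[S]_n) :
  (forall i, in_R x (v i 0)) -> forall i, in_R x (noncolon_part v i 0).
Proof. by move=> vR i; rewrite mxE; apply: in_R_mon_part. Qed.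

Lemma mon_comb_colon_part v : I (mon_comb F (colon_part v)).
Proof. by apply/mon_idealP; apply: msupp_mon_comb_part. Qed.

Lemma mon_comb_noncolon_part v :
  I (mon_comb F v) -> mon_comb F (noncolon_part v) = 0.
Proof.
move=> vI; set f := mon_comb F (noncolon_part v).
have := mon_combD F (colon_part v) (noncolon_part v).
rewrite colon_noncolon_partE -/f => combE.
have fI : I f.
  have -> : f = mon_comb F v - mon_comb F (colon_part v).
    by rewrite combE addrC addKr.
  exact: in_idealD vI (in_idealN (mon_comb_colon_part v)).
have f_not_div := @msupp_mon_comb_part _ F
  (fun i => predC (colon_monomials gens (F i))) (predC (divisible_by_gens gens))
  v (fun i b => id).
apply/eqP; rewrite -msupp_eq0; case E: (msupp f) => [// | g s].
have g_f : g \in msupp f by rewrite E mem_head.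
by have := f_not_div g g_f; rewrite /= (proj1 (mon_idealP _ _) fI g g_f).
Qed.

End Splitting.

Section BlockDiagonal.
Variables (x : 'I_m) (gens : seq 'X_{1..m}) (n a : nat).
Variables (F : 'I_n -> 'X_{1..m}) (blk : 'I_a -> 'I_n).
Variable gen : 'I_a -> 'X_{1..m}.
Local Notation I := (@mon_ideal k m gens).
Hypothesis gen_min : forall i u,
  min_mon_gen (image_mod_x x (colon I 'X_[F i])) u <->
  exists j, blk j = i /\ gen j = u.
Local Notation N :=
  (\matrix_(i < n, j < a) (if i == blk j then 'X_[gen j] else 0 : S)).

Lemma block_gen_image j : image_mod_x x (colon I 'X_[F (blk j)]) 'X_[gen j].
Proof.
have [genJ _] : min_mon_gen (image_mod_x x (colon I 'X_[F (blk j)])) (gen j).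
  by apply/gen_min; exists j.
exact: genJ.
Qed.

Lemma block_in_R i j : in_R x (N i j).
Proof.
rewrite mxE; case: eqP => _; last exact: in_R0.
by have [] := block_gen_image j.
Qed.

Lemma block_col j : col j N = 'X_[gen j] *: delta_mx (blk j) 0.
Proof.
apply/matrixP => i i'; rewrite (ord1 i') !mxE eqxx andbT.
by case: eqP => _; rewrite ?mulr1 ?mulr0.
Qed.

Lemma block_col_in_ideal :
  (forall i, I ('X_x * 'X_[F i])) -> forall j, I (mon_comb F (col j N)).
Proof.
move=> xF_in_I j; rewrite block_col mon_comb_delta.
exact: colon_image_mod_x (xF_in_I _) (block_gen_image j).
Qed.

Lemma block_colspan_monomial i (b : 'X_{1..m}) :
  b x = 0%N -> colon_monomials gens (F i) b ->
  R_colspan x N ('X_[b] *: delta_mx i 0).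
Proof.
move=> bR b_colon.
have bJ : image_mod_x x (colon I 'X_[F i]) 'X_[b].
  split; first exact: in_RX.
  exists 'X_[b], 0; split; last by rewrite mul0r addr0.
  by rewrite /colon -mpolyXD; apply: mon_idealX.
have [u le_ub /gen_min [j [<- gen_u]]] := min_mon_gen_exists bJ; subst u.
rewrite -(submK le_ub) mpolyXD -scalerA -block_col.
by apply: R_colspanZ; [apply: in_RX; rewrite mnmBE bR | apply: R_colspan_col].
Qed.

Lemma block_colspan_colon_part (v : 'cV[S]_n) :
  (forall i, in_R x (v i 0)) -> R_colspan x N (colon_part gens F v).
Proof.
move=> vR; rewrite (matrix_sum_delta (colon_part gens F v)).
apply: R_colspan_sum => i _.
rewrite big_ord1 mxE /mon_part scaler_suml big_seq_cond.
apply: R_colspan_sum => b /andP [b_v b_colon].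
rewrite -mul_mpolyC -scalerA; apply: R_colspanZ; first exact: in_RC.
exact: block_colspan_monomial (vR i b b_v) b_colon.
Qed.

End BlockDiagonal.

End MonomialIdeals.

Unset Implicit Arguments.

Theorem theorem3p4 (k : fieldType) (m : nat) (x : 'I_m)
    (gens : seq 'X_{1..m}) (hsq : squarefree_gens gens)
    (n : nat) (F : 'I_n -> 'X_{1..m}) (hFinj : injective F)
    (hF : forall u : 'X_{1..m},
        (min_mon_gen (@mon_ideal k m gens) u /\ (0 < u x)%N) <->
        exists i, u = (U_(x) + F i)%MM)
    (a : nat) (N : 'M[{mpoly k[m]}]_(n, a))
    (blk : 'I_a -> 'I_n) (gen : 'I_a -> 'X_{1..m})
    (hN : N = \matrix_(i < n, j < a) (if i == blk j then 'X_[gen j] else 0))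
    (hblk_mono : forall j1 j2 : 'I_a, (j1 <= j2)%N -> (blk j1 <= blk j2)%N)
    (hgen_inj : forall j1 j2 : 'I_a, blk j1 = blk j2 -> gen j1 = gen j2 -> j1 = j2)
    (hgen : forall (i : 'I_n) (u : 'X_{1..m}),
        min_mon_gen (image_mod_x x (colon (@mon_ideal k m gens) 'X_[F i])) u <->
        exists j, blk j = i /\ gen j = u)
    (p : nat) (P : 'M[{mpoly k[m]}]_(n, p))
    (hPR : forall i j, in_R x (P i j))
    (hPsyz : forall j, \sum_i P i j * 'X_[F i] = 0)
    (hPgen : forall v : 'cV[{mpoly k[m]}]_n, (forall i, in_R x (v i 0)) ->
        \sum_i v i 0 * 'X_[F i] = 0 -> R_colspan x P v)
    (hPmin : forall j0 : 'I_p, ~ exists w : 'I_p -> {mpoly k[m]},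
        (forall j, in_R x (w j)) /\
        forall i, P i j0 = \sum_(j < p | j != j0) P i j * w j) :
  presentation_matrix x (@mon_ideal k m gens) F (row_mx N P).
Proof.
subst N; set I := mon_ideal gens.
have xF_in_I i : I ('X_x * 'X_[F i]).
  have [[xFI _] _] := (hF (U_(x) + F i)%MM).2 (ex_intro _ i erefl).
  by rewrite -mpolyXD.
split=> [i j | v vR].
  rewrite -(splitK j); case: (split j) => j' /=.
    by rewrite row_mxEl; exact: (block_in_R hgen).
  by rewrite row_mxEr.
split=> [vI | v_span].
  rewrite -(colon_noncolon_partE gens F v); apply: R_colspanD.
    exact/R_colspan_row_mxl/block_colspan_colon_part.
  apply/R_colspan_row_mxr/hPgen; first exact: in_R_noncolon_part.
  exact: mon_comb_noncolon_part.
apply: mon_comb_in_ideal v_span => j.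
rewrite -(splitK j); case: (split j) => j' /=.
  by rewrite colKl; apply: block_col_in_ideal.
rewrite colKr /mon_comb; under eq_bigr => i _ do rewrite mxE.
by rewrite hPsyz; apply: in_ideal0.
Qed.
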